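(* Consider, for a fixed time slot $t$ and a fixed degradation action, the convex bandwidth allocation problem $$\min_{\{b_{t,n}\},\{\tau^{\rm o}_{t,n}\}} \sum_{n=1}^N w_n \tau^{\rm o}_{t,n}\quad \text{s.t.}\quad \frac{d_{t,n}}{\tau^{\rm o}_{t,n}} \le b_{t,n} W \log_2\!\left(1+\frac{p_n h_{t,n}}{b_{t,n} W \delta^2}\right)\ \forall n,\quad \sum_{n=1}^N b_{t,n}\le 1,\quad b_{t,n}\ge 0,\ \tau^{\rm o}_{t,n}\ge 0\ \forall n.$$ Let $\phi_n\ge 0$ be the Lagrange multipliers of the per-device rate constraints and $\eta\ge 0$ the multiplier of the total bandwidth constraint, and let $\{\eta^\ast,\phi_n^\ast\}$ be the optimal dual variables (maximizers of the Lagrange dual function). Then the optimal solution $\{b_{t,n}^\ast, \tau^{\rm o\ast}_{t,n}\}$ of this problem has the closed-form structure $$\tau^{\rm o\ast}_{t,n} = \sqrt{\frac{\phi_n^\ast d_{t,n}}{w_n}},\qquad b_{t,n}^\ast = \frac{-p_n h_{t,n}}{W\delta^2\left[1+\left(\mathcal{W}\!\left(-\frac{1}{\exp\left(\frac{\eta^\ast \ln 2}{\phi_n^\ast W}+1\right)}\right)\right)^{-1}\right]},$$ where $\mathcal{W}(\cdot)$ is the Lambert-$\mathcal{W}$ function and $\exp(\cdot)$ is the exponential function.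
   Context: Edge inference system with $N$ edge devices offloading images to an edge server over FDMA with total bandwidth $W$; $b_{t,n}\ge 0$ is the fraction of bandwidth allocated to device $n$ in slot $t$, $p_n$ its fixed transmit power, $h_{t,n}$ its channel gain, $\delta^2$ the noise power spectral density, $d_{t,n}$ the offloaded data size in bits (determined by the fixed degradation action), $\tau^{\rm o}_{t,n}$ the offloading time, and $w_n\ge 0$ the latency weighting factor. *)

From HB Require Import structures.
From mathcomp Require Import all_boot all_order all_algebra.
From mathcomp Require Import all_classical all_reals.
From mathcomp Require Import ereal sequences exp.
Set Implicit Arguments. Unset Strict Implicit. Unset Printing Implicit Defensive.
Import Order.TTheory GRing.Theory Num.Theory.
Local Open Scope classical_set_scope.
Local Open Scope ring_scope.

(* Principal branch W_0 of the Lambert W function: for x >= -1/e, the unique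
   w >= -1 with w * e^w = x (chosen by xget; default 0 outside the domain). *)
Definition LambertW {R : realType} (x : R) : R :=
  xget 0 [set w : R | -1 <= w /\ w * expR w = x].

Definition log2 {R : realType} (x : R) : R := ln x / ln 2.

Definition rate {R : realType} (W dl2 p h b : R) : R :=
  b * W * log2 (1 + p * h / (b * W * dl2)).

Section Problem.
Context {R : realType} {N : nat}.
Variables (W dl2 : R) (p h d w : 'I_N -> R).

Definition objective (tau : 'I_N -> R) : R := \sum_(n < N) w n * tau n.

(* feasible set; offloading times are required positive so that d/tau is defined *)
Definition feasible (b tau : 'I_N -> R) : Prop :=
  (forall n, 0 <= b n) /\ (forall n, 0 < tau n) /\ (\sum_(n < N) b n <= 1) /\
  (forall n, d n / tau n <= rate W dl2 (p n) (h n) (b n)).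

Definition primal_optimal (b tau : 'I_N -> R) : Prop :=
  feasible b tau /\
  forall b' tau', feasible b' tau' -> objective tau <= objective tau'.

Definition lagrangian (b tau phi : 'I_N -> R) (eta : R) : R :=
  objective tau
  + \sum_(n < N) phi n * (d n / tau n - rate W dl2 (p n) (h n) (b n))
  + eta * (\sum_(n < N) b n - 1).

Definition dual_fun (phi : 'I_N -> R) (eta : R) : \bar R :=
  ereal_inf [set x : \bar R | exists b tau : 'I_N -> R,
     (forall n, 0 <= b n) /\ (forall n, 0 < tau n) /\
     x = (lagrangian b tau phi eta)%:E].

Definition dual_optimal (phi : 'I_N -> R) (eta : R) : Prop :=
  (forall n, 0 <= phi n) /\ 0 <= eta /\
  forall phi' eta', (forall n, 0 <= phi' n) -> 0 <= eta' ->
    (dual_fun phi' eta' <= dual_fun phi eta)%E.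

End Problem.

From mathcomp Require Import all_boot all_order all_algebra.
From mathcomp Require Import all_classical all_reals.
From mathcomp Require Import ereal sequences exp derive realfun.
From mathcomp Require Import ring lra normedtype.
Import numFieldNormedType.Exports.
Import Order.TTheory GRing.Theory Num.Theory.
Local Open Scope ring_scope.

(* At a primal optimum every rate constraint is tight and the whole band is
   used, otherwise some offloading time could be shortened.  The rate is
   [W/ln 2 * r_k(b)] with [r_k(b) = b ln (1 + a_k / b)] concave,
   [a_k = p_k h_k / (W dl2)].  Moving bandwidth between two devices and applying
   Fermat's rule shows that [w_k tau_k^2 / d_k * W/ln 2 * r'_k(b_k)] is the
   same for all devices.  Taking it as [eta] and
   [phi_k = w_k tau_k^2 / d_k], the primal optimum minimises every term of the
   Lagrangian (AM-GM in [tau_k], concavity of [r_k] in [b_k]), so there is no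
   duality gap.  Hence the primal optimum also minimises the Lagrangian at any
   dual optimum [(phi, eta)], and the first-order conditions
   [w_n = phi_n d_n / tau_n^2] and [eta = phi_n W/ln 2 * r'_n(b_n)] are solved
   in closed form; with [v = - b_n / (b_n + a_n)] the second one reads
   [v e^v = - exp (- (eta ln 2 / (phi_n W) + 1))], whence the Lambert W. *)

Section LambertW.
Context {R : realType}.

Lemma lt_mul_expR (u v : R) : -1 <= u -> u < v -> u * expR u < v * expR v.
Proof.
move=> u_ge uv; have ev_gt0 : 0 < expR v := expR_gt0 v.
have [u_lt0|u_ge0] := ltP u 0; last first.
  rewrite (@le_lt_trans _ _ (u * expR v)) ?ltr_pM2r //.
  by rewrite ler_wpM2l // ler_expR ltW.
have expRu : expR u = expR (u - v) * expR v by rewrite -expRD subrK.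
have expR_gt : 1 + (u - v) < expR (u - v).
  by apply: expR_gt1Dx; rewrite subr_eq0 lt_eqF.
have : u * expR (u - v) < u * (1 + (u - v)) by rewrite ltr_nM2l.
rewrite expRu mulrA ltr_pM2r //; nra.
Qed.

Lemma LambertW_mul_expR (v : R) : -1 <= v -> LambertW (v * expR v) = v.
Proof.
move=> v1; apply: xget_unique => [//|y [y1 yE]].
by have [/(lt_mul_expR _ _ y1)|/(lt_mul_expR _ _ v1)|//] := ltgtP y v;
  rewrite yE ltxx.
Qed.

End LambertW.

Section Stationarity.
Context {R : realType}.
Implicit Types f g df dg : R -> R.

Lemma is_derive_min_eq0 f df (a b c : R) :
  (forall x, a < x < b -> is_derive x 1 f (df x)) -> a < c < b ->
  (forall x, a < x < b -> f c <= f x) -> df c = 0.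
Proof.
move=> fD cab cmin; have /andP[ac cb] := cab.
have [_ <-] := fD c cab.
suff [] : is_derive c 1 f 0 by [].
apply: (@derive1_at_min _ f a b c) => [|t||t]; rewrite ?in_itv /=.
- by rewrite ltW // (lt_trans ac).
- by move=> /fD [].
- exact: cab.
- exact: cmin.
Qed.

Lemma is_derive_exchange_min f g df dg (S c : R) :
  (forall x, 0 < x < S -> is_derive x 1 f (df x)) ->
  (forall x, 0 < x < S -> is_derive x 1 g (dg x)) -> 0 < c < S ->
  (forall x, 0 < x < S -> f c + g (S - c) <= f x + g (S - x)) ->
  df c = dg (S - c).
Proof.
move=> fD gD cS cmin; apply/eqP; rewrite -subr_eq0; apply/eqP.
apply: (@is_derive_min_eq0 (fun x => f x + g (S - x)) (fun x => df x - dg (S - x)) 0 S)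
  => // x xS.
have ySx : 0 < S - x < S by case/andP: xS => ? ?; apply/andP; split; lra.
have dS : is_derive x 1 (fun y => S - y) (-1) by rewrite -sub0r; exact: is_deriveB.
have := @is_derive1_comp _ g (fun y => S - y) x _ _ (gD _ ySx) dS; rewrite mulrN1 => dgS.
exact: is_deriveD (fD x xS) dgS.
Qed.

Lemma is_derive_cst_div f (c x d : R) : f x != 0 -> is_derive x 1 f d ->
  is_derive x 1 (fun y => c / f y) (- (c / f x) * d / f x).
Proof.
move=> fx0 fD; have := is_deriveZ c (is_deriveV fx0 fD).
by move/is_derive_eq; apply; rewrite /GRing.scale /=; field.
Qed.

End Stationarity.

Lemma lin_inv_minP {R : rcfType} (a c t0 : R) : 0 < a -> 0 <= c -> 0 < t0 ->
  (forall t, 0 < t -> a * t0 + c / t0 <= a * t + c / t) <-> t0 = Num.sqrt (c / a).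
Proof.
move=> a0 c0 t00; set s := Num.sqrt (c / a).
have s0 : 0 <= s := sqrtr_ge0 _.
have cE : c = a * s ^+ 2.
  by rewrite sqr_sqrtr; [field; rewrite gt_eqF | rewrite divr_ge0 // ltW].
have amgm t : 0 < t -> a * t + c / t = 2 * (a * s) + a * (t - s) ^+ 2 / t.
  by move=> t_gt0; rewrite cE; field; rewrite gt_eqF.
have sq_ge0 t : 0 < t -> 0 <= a * (t - s) ^+ 2 / t.
  by move=> t_gt0; rewrite divr_ge0 ?(ltW t_gt0) // mulr_ge0 ?(ltW a0) ?sqr_ge0.
split=> [t0min|t0E t t_gt0]; last first.
  rewrite t0E in t00 *.
  by rewrite !amgm // subrr expr0n /= mulr0 mul0r addr0 lerDl sq_ge0.
have [s_eq0|s_gt0] := eqVneq s 0.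
  have := t0min (t0 / 2); rewrite cE s_eq0 expr0n /= !mulr0 !mul0r !addr0.
  by rewrite divr_gt0 // ler_pM2l // => /(_ isT); lra.
have {}s_gt0 : 0 < s by rewrite lt_def s_gt0.
have := t0min s s_gt0; rewrite !amgm // subrr expr0n /= mulr0 mul0r addr0.
rewrite gerDl => le0; apply/eqP; rewrite -subr_eq0 -sqrf_eq0.
have : a * (t0 - s) ^+ 2 / t0 == 0 by rewrite eq_le le0 sq_ge0.
by rewrite !mulf_eq0 invr_eq0 (gt_eqF a0) (gt_eqF t00) orbF.
Qed.

Section NormalizedRate.
Context {R : realType}.
Implicit Types a x y : R.

Lemma ln_le_subr1 y : 0 < y -> ln y <= y - 1.
Proof. by move=> y0; rewrite -[y in ln y](subrKC 1) le_ln1Dx // ltrBrDl subrr. Qed.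

Lemma ln_lt_subr1 y : 0 < y -> y != 1 -> ln y < y - 1.
Proof.
move=> y0 y1; rewrite -ltr_expR lnK ?posrE // -[y in y < _](subrKC 1).
by apply: expR_gt1Dx; rewrite subr_eq0.
Qed.

(* [x ln (1 + a / x)]: the rate in units of [W / ln 2] when [a] is the SNR *)
Definition nrate a x := x * (ln (x + a) - ln x).

Definition dnrate a x := ln (x + a) - ln x - a / (x + a).

Lemma nrate0 a : nrate a 0 = 0.
Proof. by rewrite /nrate mul0r. Qed.

Lemma nrate_gt0 a x : 0 < a -> 0 < x -> 0 < nrate a x.
Proof. by move=> a0 x0; rewrite mulr_gt0 // subr_gt0 ltr_ln ?posrE ?ltrDl ?addr_gt0. Qed.

Lemma dnrate_gt0 a x : 0 < a -> 0 < x -> 0 < dnrate a x.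
Proof.
move=> a0 x0; have xa0 : 0 < x + a by rewrite addr_gt0.
have y1 : x / (x + a) < 1 by rewrite ltr_pdivrMr // mul1r ltrDl.
have := ln_lt_subr1 _ (divr_gt0 x0 xa0) (negbT (lt_eqF y1)).
rewrite ln_div ?posrE // (_ : x / (x + a) - 1 = - (a / (x + a))).
  by rewrite /dnrate; lra.
by field; rewrite gt_eqF.
Qed.

Lemma nrate_tangent a x0 x : 0 < a -> 0 < x0 -> 0 <= x ->
  nrate a x <= nrate a x0 + dnrate a x0 * (x - x0).
Proof.
move=> a0 x00; have x0a : 0 < x0 + a by rewrite addr_gt0.
have tangentE : nrate a x0 + dnrate a x0 * (x - x0) =
    x * (ln (x0 + a) - ln x0) + a / (x0 + a) * (x0 - x) by rewrite /nrate /dnrate; ring.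
rewrite tangentE le_eqVlt => /predU1P[<-|x_gt0].
  by rewrite nrate0 mul0r add0r subr0 mulr_ge0 ?divr_ge0 ?ltW.
have xa : 0 < x + a by rewrite addr_gt0.
have := ln_le_subr1 _ (divr_gt0 (mulr_gt0 xa x00) (mulr_gt0 x_gt0 x0a)).
rewrite ln_div ?lnM ?posrE ?mulr_gt0 // -(ler_pM2l x_gt0).
have -> : x * ((x + a) * x0 / (x * (x0 + a)) - 1) = a / (x0 + a) * (x0 - x).
  by field; rewrite !gt_eqF.
by rewrite /nrate; lra.
Qed.

Lemma nrate_lt a x y : 0 < a -> 0 < x -> x < y -> nrate a x < nrate a y.
Proof.
move=> a0 x0 xy; have y0 := lt_trans x0 xy.
apply: le_lt_trans (nrate_tangent _ _ _ a0 y0 (ltW x0)) _.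
by rewrite gtrDl pmulr_rlt0 ?dnrate_gt0 // subr_lt0.
Qed.

Lemma is_derive_nrate a x : 0 < a -> 0 < x -> is_derive x 1 (nrate a) (dnrate a x).
Proof.
move=> a0 x0; have xa : 0 < x + a by rewrite addr_gt0.
have dlnS : is_derive x 1 (fun y => ln (y + a)) (x + a)^-1.
  have := @is_derive1_comp _ (@ln R) (shift a) x _ _ (is_derive1_ln xa).
  by move=> /(_ _ (is_derive_shift x 1 a)); rewrite mulr1.
have := is_deriveM (is_derive_id x 1) (is_deriveB dlnS (is_derive1_ln x0)).
by move/is_derive_eq; apply; rewrite /dnrate /GRing.scale !fctE /=; field; rewrite !gt_eqF.
Qed.

Lemma nrate_minP a e c b0 : 0 < a -> 0 <= c -> 0 < b0 ->
  (forall b, 0 <= b -> e * b0 - c * nrate a b0 <= e * b - c * nrate a b) <->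
  e = c * dnrate a b0.
Proof.
move=> a0 c0 b00; split=> [b0min|-> b b_ge0].
  apply/eqP; rewrite -subr_eq0; apply/eqP.
  apply: (@is_derive_min_eq0 _ (fun b => e * b - c * nrate a b)
           (fun b => e - c * dnrate a b) 0 (b0 + 1))
    => [b /andP[b_gt0 _]||b /andP[b_gt0 _]].
  - have := is_deriveZ c (is_derive_nrate _ _ a0 b_gt0).
    move=> /(is_deriveB (is_deriveZ e (is_derive_id b 1))).
    by move/is_derive_eq; apply; rewrite /GRing.scale /= mulr1.
  - by apply/andP; split; lra.
  - exact: b0min (ltW b_gt0).
have := ler_wpM2l c0 (nrate_tangent _ _ _ a0 b00 b_ge0); nra.
Qed.

Lemma nrate_LambertW a x : 0 < a -> 0 < x ->
  x = - a / (1 + (LambertW (- (expR (dnrate a x + 1))^-1))^-1).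
Proof.
move=> a0 x0; have xa : 0 < x + a by rewrite addr_gt0.
set v := - (x / (x + a)).
have v_ge : -1 <= v by rewrite lerN2 ler_pdivrMr // mul1r lerDl ltW.
suff -> : - (expR (dnrate a x + 1))^-1 = v * expR v.
  rewrite LambertW_mul_expR // /v invrN invf_div.
  by rewrite (_ : 1 + - _ = - a / x) ?invf_div; field; rewrite !gt_eqF.
rewrite /v /dnrate.
have -> : ln (x + a) - ln x - a / (x + a) + 1 = ln ((x + a) / x) + x / (x + a).
  by rewrite ln_div ?posrE //; field; rewrite gt_eqF.
by rewrite expRD lnK ?posrE ?divr_gt0 // invfM invf_div expRN mulNr.
Qed.

End NormalizedRate.

Lemma sumrB_out {I : finType} {V : zmodType} (F G : I -> V) (A : {set I}) :
  (forall i, i \notin A -> F i = G i) ->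
  \sum_i F i - \sum_i G i = \sum_(i in A) (F i - G i).
Proof.
move=> FG; rewrite -sumrB (bigID (mem A)) /= addrC big1 ?add0r // => i /FG ->.
exact: subrr.
Qed.

Lemma sumrB_with {I : finType} {V : zmodType} (F G : I -> V) (k : I) :
  (forall i, i != k -> F i = G i) -> \sum_i F i - \sum_i G i = F k - G k.
Proof.
by move=> FG; rewrite (sumrB_out _ _ [set k]%SET) ?big_set1 // => i /set1P/eqP/FG.
Qed.

Lemma sumrB_with2 {I : finType} {V : zmodType} (F G : I -> V) (k l : I) :
  k != l -> (forall i, i != k -> i != l -> F i = G i) ->
  \sum_i F i - \sum_i G i = (F k - G k) + (F l - G l).
Proof.
move=> kl FG; rewrite (sumrB_out _ _ [set k; l]%SET).
  by rewrite big_setU1 ?big_set1 //= inE.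
by move=> i; rewrite !inE negb_or => /andP[/FG]; apply.
Qed.

Section Problem.
Context {R : realType} {N : nat} {W dl2 : R} {p h d w : 'I_N -> R}.
Hypotheses (HW : 0 < W) (Hdl2 : 0 < dl2) (Hp : forall n, 0 < p n)
  (Hh : forall n, 0 < h n) (Hd : forall n, 0 < d n) (Hw : forall n, 0 < w n).

Definition snr k := p k * h k / (W * dl2).

Definition W_ln2 := W / ln (2 : R).

Lemma snr_gt0 k : 0 < snr k.
Proof. by rewrite divr_gt0 ?mulr_gt0. Qed.

Lemma W_ln2_gt0 : 0 < W_ln2.
Proof. by rewrite divr_gt0 // ln_gt0 // ltr1n. Qed.

Lemma rate_nrate k b : 0 <= b ->
  rate W dl2 (p k) (h k) b = W_ln2 * nrate (snr k) b.
Proof.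
rewrite le_eqVlt => /predU1P[<-|b0]; first by rewrite /rate nrate0 !mul0r mulr0.
have snr0 := snr_gt0 k.
rewrite /rate /log2 /nrate /W_ln2 -ln_div ?posrE ?addr_gt0 //.
rewrite (_ : 1 + _ = (b + snr k) / b); last by rewrite /snr; field; rewrite !gt_eqF.
by field; rewrite gt_eqF // ln_gt0 // ltr1n.
Qed.

Definition lagrangian_term (phi eta : R) k (b t : R) :=
  w k * t + phi * (d k / t - rate W dl2 (p k) (h k) b) + eta * b.

Lemma lagrangianE b tau phi eta :
  lagrangian W dl2 p h d w b tau phi eta =
  \sum_k lagrangian_term (phi k) eta k (b k) (tau k) - eta.
Proof.
rewrite /lagrangian /objective /lagrangian_term !big_split /=.
by rewrite -mulr_sumr mulrBr mulr1 addrA.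
Qed.

Lemma lagrangian_le_dualP phi eta b0 t0 :
  (forall k, 0 <= b0 k) -> (forall k, 0 < t0 k) ->
  ((lagrangian W dl2 p h d w b0 t0 phi eta)%:E <= dual_fun W dl2 p h d w phi eta)%E <->
  (forall k b t, 0 <= b -> 0 < t ->
     lagrangian_term (phi k) eta k (b0 k) (t0 k) <= lagrangian_term (phi k) eta k b t).
Proof.
move=> b0_ge0 t0_gt0; split=> [Ldual k b t b_ge0 t_gt0|lmin].
  set b' := [eta b0 with k |-> b]; set t' := [eta t0 with k |-> t].
  have : (lagrangian W dl2 p h d w b0 t0 phi eta <= lagrangian W dl2 p h d w b' t' phi eta).
    rewrite -lee_fin; apply: le_trans Ldual _; apply: ereal_inf_lbound.
    exists b', t'; split=> [j|]; last split=> [j|//].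
      by rewrite /b' /=; case: ifP.
    by rewrite /t' /=; case: ifP.
  have updk : b' k = b /\ t' k = t by rewrite /b' /t' /= eqxx.
  have updj j : j != k -> b' j = b0 j /\ t' j = t0 j.
    by move=> /negbTE jk; rewrite /b' /t' /= jk.
  rewrite !lagrangianE lerD2r -subr_ge0 (sumrB_with _ _ k) => [|j /updj[-> ->] //].
  by case: updk => -> ->; rewrite subr_ge0.
apply: le_ereal_inf_tmp => _ [b [t [b_ge0 [t_gt0 ->]]]].
by rewrite lee_fin !lagrangianE lerD2r ler_sum // => k _; apply: lmin.
Qed.

Lemma lagrangian_termE phi eta k b t : 0 <= b ->
  lagrangian_term phi eta k b t =
  (w k * t + phi * d k / t) + (eta * b - phi * W_ln2 * nrate (snr k) b).
Proof. by move=> b_ge0; rewrite /lagrangian_term rate_nrate //; ring. Qed.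

Lemma lagrangian_term_minP phi eta k b0 t0 : 0 <= phi -> 0 < b0 -> 0 < t0 ->
  (forall b t, 0 <= b -> 0 < t ->
     lagrangian_term phi eta k b0 t0 <= lagrangian_term phi eta k b t) <->
  t0 = Num.sqrt (phi * d k / w k) /\ eta = phi * W_ln2 * dnrate (snr k) b0.
Proof.
move=> phi_ge0 b00 t00.
have c_ge0 : 0 <= phi * W_ln2 by rewrite mulr_ge0 // ltW // W_ln2_gt0.
rewrite -(lin_inv_minP _ _ _ (Hw k) (mulr_ge0 phi_ge0 (ltW (Hd k))) t00).
rewrite -(nrate_minP _ _ _ _ (snr_gt0 k) c_ge0 b00).
split=> [lmin|[tmin bmin] b t b_ge0 t_gt0]; last first.
  by rewrite !lagrangian_termE ?(ltW b00) // lerD ?tmin ?bmin.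
split=> [t t_gt0|b b_ge0].
  by have := lmin b0 t (ltW b00) t_gt0; rewrite !lagrangian_termE ?(ltW b00) // lerD2r.
by have := lmin b t0 b_ge0 t00; rewrite !lagrangian_termE ?(ltW b00) // lerD2l.
Qed.

Section PrimalOptimum.
Context {bs taus : 'I_N -> R}.
Hypothesis opt : primal_optimal W dl2 p h d w bs taus.

Let bs_ge0 : forall k, 0 <= bs k := opt.1.1.
Let taus_gt0 : forall k, 0 < taus k := opt.1.2.1.
Let sum_bs_le1 : \sum_k bs k <= 1 := opt.1.2.2.1.
Let rate_ge : forall k, d k / taus k <= rate W dl2 (p k) (h k) (bs k) := opt.1.2.2.2.

Lemma objective_with (tau : 'I_N -> R) k t :
  objective w [eta tau with k |-> t] = objective w tau + w k * (t - tau k).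
Proof.
apply/eqP; rewrite addrC -subr_eq; apply/eqP.
by rewrite (sumrB_with _ _ k) /= ?eqxx ?mulrBr // => j /negbTE ->.
Qed.

Lemma bs_gt0 k : 0 < bs k.
Proof.
rewrite lt_def bs_ge0 andbT; apply: contraTneq (rate_ge k) => ->.
by rewrite rate_nrate // nrate0 mulr0 -ltNge divr_gt0.
Qed.

Lemma rate_tight k : d k / taus k = rate W dl2 (p k) (h k) (bs k).
Proof.
apply/eqP; rewrite eq_le rate_ge leNgt; apply/negP => rate_gt.
have r_gt0 : 0 < rate W dl2 (p k) (h k) (bs k) by apply: lt_trans rate_gt; rewrite divr_gt0.
set t := d k / rate W dl2 (p k) (h k) (bs k).
have t_lt : t < taus k by rewrite ltr_pdivrMr // mulrC -ltr_pdivrMr.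
have feas : feasible W dl2 p h d bs [eta taus with k |-> t].
  split=> //; split=> [j|]; first by rewrite /=; case: ifP; rewrite ?divr_gt0.
  split=> // j /=; case: (eqVneq j k) => [->|_]; last exact: rate_ge.
  by rewrite invf_div mulrC divfK ?gt_eqF.
have := opt.2 _ _ feas; rewrite objective_with -subr_ge0 addrC addKr.
by rewrite pmulr_rge0 // subr_ge0 leNgt t_lt.
Qed.

(* [w_k] times the shortest offloading time allowed by bandwidth [x] *)
Definition cost k x := w k * d k / (W_ln2 * nrate (snr k) x).

Lemma tausE k : taus k = d k / (W_ln2 * nrate (snr k) (bs k)).
Proof. by rewrite -rate_nrate ?bs_ge0 // -rate_tight invf_div mulrC divfK ?gt_eqF. Qed.

Lemma objective_cost : objective w taus = \sum_k cost k (bs k).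
Proof. by apply: eq_bigr => k _; rewrite tausE mulrA. Qed.

Lemma objective_le_cost b : (forall k, 0 < b k) -> \sum_k b k <= 1 ->
  objective w taus <= \sum_k cost k (b k).
Proof.
move=> b_gt0 sum_b_le1.
have r_gt0 k : 0 < W_ln2 * nrate (snr k) (b k).
  by rewrite mulr_gt0 ?W_ln2_gt0 ?nrate_gt0 ?snr_gt0.
apply: le_trans (opt.2 b (fun k => d k / (W_ln2 * nrate (snr k) (b k))) _) _.
  split=> [k|]; first exact: ltW.
  split=> [k|]; first by rewrite divr_gt0.
  by split=> // k; rewrite rate_nrate ?(ltW (b_gt0 k)) // invf_div mulrC divfK ?gt_eqF.
by rewrite /objective /cost; under eq_bigr do rewrite mulrA.
Qed.

Lemma cost_lt k x y : 0 < x -> x < y -> cost k y < cost k x.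
Proof.
move=> x0 xy; have y0 := lt_trans x0 xy.
have r_gt0 z : 0 < z -> 0 < W_ln2 * nrate (snr k) z.
  by move=> z0; exact: mulr_gt0 W_ln2_gt0 (nrate_gt0 _ _ (snr_gt0 k) z0).
rewrite ltr_pM2l ?mulr_gt0 // ltf_pV2 ?posrE ?r_gt0 //.
by rewrite ltr_pM2l ?W_ln2_gt0 // nrate_lt ?snr_gt0.
Qed.

(* [k0] only witnesses [N > 0]: for [N = 0] the sum is [0]. *)
Lemma sum_bs (k0 : 'I_N) : \sum_k bs k = 1.
Proof.
apply/eqP; rewrite eq_le sum_bs_le1 leNgt; apply/negP => sum_lt1.
have slack : 0 < 1 - \sum_k bs k by rewrite subr_gt0.
set b := [eta bs with k0 |-> bs k0 + (1 - \sum_k bs k)].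
have bk0 : b k0 = bs k0 + (1 - \sum_k bs k) by rewrite /b /= eqxx.
have bj j : j != k0 -> b j = bs j by move=> /negbTE jk0; rewrite /b /= jk0.
have b_gt0 k : 0 < b k.
  have [->|/bj ->] := eqVneq k k0; last exact: bs_gt0.
  by rewrite bk0 addr_gt0 ?bs_gt0.
have sum_b_le1 : \sum_k b k <= 1.
  have : \sum_k b k - \sum_k bs k = 1 - \sum_k bs k.
    by rewrite (sumrB_with _ _ k0) => [|j /bj //]; rewrite bk0 addrAC subrr add0r.
  lra.
have := objective_le_cost _ b_gt0 sum_b_le1.
rewrite objective_cost -subr_ge0 (sumrB_with _ _ k0) => [|j /bj -> //].
by rewrite bk0 subr_ge0 leNgt cost_lt ?bs_gt0 // ltrDl.
Qed.

Lemma cost_exchange n m x : n != m -> 0 < x < bs n + bs m ->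
  cost n (bs n) + cost m (bs m) <= cost n x + cost m (bs n + bs m - x).
Proof.
move=> nm /andP[x_gt0 x_lt]; set S := bs n + bs m.
set b := [eta bs with n |-> x, m |-> S - x].
have bn : b n = x by rewrite /b /= eqxx.
have bm : b m = S - x by rewrite /b /= eq_sym (negbTE nm) eqxx.
have bj j : j != n -> j != m -> b j = bs j.
  by move=> /negbTE jn /negbTE jm; rewrite /b /= jn jm.
have b_gt0 k : 0 < b k.
  have [->|kn] := eqVneq k n; first by rewrite bn.
  have [->|/(bj _ kn) ->] := eqVneq k m; last exact: bs_gt0.
  by rewrite bm subr_gt0.
have sum_b_le1 : \sum_k b k <= 1.
  have : \sum_k b k - \sum_k bs k = 0.
    by rewrite (sumrB_with2 _ _ _ _ nm bj) bn bm /S; ring.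
  by have := sum_bs_le1; lra.
have := objective_le_cost _ b_gt0 sum_b_le1.
rewrite objective_cost -subr_ge0 (sumrB_with2 _ _ _ _ nm) => [|j jn jm]; last by rewrite bj.
by rewrite bn bm; lra.
Qed.

Definition dcost k x := - cost k x * dnrate (snr k) x / nrate (snr k) x.

Lemma is_derive_cost k (x : R) : 0 < x -> is_derive x 1 (cost k) (dcost k x).
Proof.
move=> x_gt0; have r_gt0 := nrate_gt0 _ _ (snr_gt0 k) x_gt0.
have := is_deriveZ W_ln2 (is_derive_nrate _ _ (snr_gt0 k) x_gt0).
move=> /(is_derive_cst_div (fun y => W_ln2 * nrate (snr k) y) (w k * d k)).
move=> /(_ (mulf_neq0 (lt0r_neq0 W_ln2_gt0) (lt0r_neq0 r_gt0))).
move/is_derive_eq; apply; rewrite /GRing.scale /= /dcost /cost.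
by field; rewrite (lt0r_neq0 W_ln2_gt0) (lt0r_neq0 r_gt0).
Qed.

Definition phi_kkt k := w k * taus k ^+ 2 / d k.

Definition marginal k := phi_kkt k * W_ln2 * dnrate (snr k) (bs k).

Lemma dcost_marginal k : dcost k (bs k) = - marginal k.
Proof.
have r_gt0 := nrate_gt0 _ _ (snr_gt0 k) (bs_gt0 k).
by rewrite /marginal /phi_kkt /dcost tausE /cost; field; rewrite !gt_eqF ?W_ln2_gt0.
Qed.

Lemma marginal_eq n m : marginal n = marginal m.
Proof.
have [->//|nm] := eqVneq n m.
apply: oppr_inj; rewrite -!dcost_marginal.
have -> : bs m = bs n + bs m - bs n by ring.
apply: (@is_derive_exchange_min _ (cost n) (cost m) (dcost n) (dcost m))
  => [x /andP[x_gt0 _]|x /andP[x_gt0 _]||].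
- exact: is_derive_cost.
- exact: is_derive_cost.
- by rewrite bs_gt0 ltrDl bs_gt0.
- by move=> x; rewrite [bs n + _ - _]addrAC subrr add0r; exact: cost_exchange.
Qed.

Lemma lagrangian_optimum (k0 : 'I_N) phi eta :
  lagrangian W dl2 p h d w bs taus phi eta = objective w taus.
Proof.
rewrite /lagrangian (sum_bs k0) subrr mulr0 addr0 big1 ?addr0 // => k _.
by rewrite rate_tight subrr mulr0.
Qed.

Lemma strong_duality (k0 : 'I_N) : exists phi eta,
  [/\ forall k, 0 <= phi k, 0 <= eta &
      ((objective w taus)%:E <= dual_fun W dl2 p h d w phi eta)%E].
Proof.
have phi_ge0 k : 0 <= phi_kkt k by rewrite divr_ge0 ?mulr_ge0 ?sqr_ge0 // ltW.
have dnrate_ge0 : 0 <= dnrate (snr k0) (bs k0) by rewrite ltW ?dnrate_gt0 ?snr_gt0 ?bs_gt0.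
exists phi_kkt, (marginal k0); split=> //.
  by rewrite /marginal mulr_ge0 // mulr_ge0 // ltW // W_ln2_gt0.
rewrite -(lagrangian_optimum k0 phi_kkt (marginal k0)) lagrangian_le_dualP // => k.
rewrite lagrangian_term_minP ?bs_gt0 //; split; last by rewrite (marginal_eq k0 k).
have -> : phi_kkt k * d k / w k = taus k ^+ 2 by rewrite /phi_kkt; field; rewrite !gt_eqF.
by rewrite sqrtr_sqr gtr0_norm.
Qed.

Lemma kkt_conditions {phis : 'I_N -> R} {etas : R} :
  dual_optimal W dl2 p h d w phis etas ->
  forall n, taus n = Num.sqrt (phis n * d n / w n) /\
            etas = phis n * W_ln2 * dnrate (snr n) (bs n).
Proof.
move=> [phis_ge0 [etas_ge0 dual_max]] n.
have [phi [eta [phi_ge0 eta_ge0 obj_le_dual]]] := strong_duality n.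
have : ((lagrangian W dl2 p h d w bs taus phis etas)%:E
         <= dual_fun W dl2 p h d w phis etas)%E.
  rewrite (lagrangian_optimum n).
  exact: le_trans obj_le_dual (dual_max _ _ phi_ge0 eta_ge0).
move=> /(lagrangian_le_dualP _ _ _ _ bs_ge0 taus_gt0)/(_ n).
by rewrite lagrangian_term_minP ?bs_gt0.
Qed.

End PrimalOptimum.

End Problem.

Theorem proposition1 (R : realType) (N : nat) (W dl2 : R)
  (p h d w : 'I_N -> R)
  (HW : 0 < W) (Hdl2 : 0 < dl2)
  (Hp : forall n, 0 < p n) (Hh : forall n, 0 < h n)
  (Hd : forall n, 0 < d n) (Hw : forall n, 0 < w n)
  (bs taus phis : 'I_N -> R) (etas : R) :
  primal_optimal W dl2 p h d w bs taus ->
  dual_optimal W dl2 p h d w phis etas ->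
  forall n : 'I_N,
    taus n = Num.sqrt (phis n * d n / w n) /\
    bs n = - (p n * h n) /
           (W * dl2 * (1 + (LambertW (- (expR (etas * ln 2 / (phis n * W) + 1))^-1))^-1)).
Proof.
move=> opt dopt n.
have [tauE etaE] := kkt_conditions HW Hdl2 Hp Hh Hd Hw opt dopt n.
split=> //.
have phi_gt0 : 0 < phis n.
  have := opt.1.2.1 n; rewrite tauE sqrtr_gt0 pmulr_lgt0 ?invr_gt0 //.
  by rewrite pmulr_lgt0.
have -> : etas * ln 2 / (phis n * W) = dnrate (p n * h n / (W * dl2)) (bs n).
  by rewrite etaE /W_ln2; field; rewrite !gt_eqF // ln_gt0 // ltr1n.
rewrite {1}(nrate_LambertW _ _ (snr_gt0 HW Hdl2 Hp Hh n) (bs_gt0 HW Hdl2 Hp Hh Hd opt n)).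
by rewrite /snr [in RHS]invfM [in RHS]mulrA [in RHS]mulNr.
Qed.
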